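(* Assume Assumption 1, Assumption 2 and the null hypothesis $H_0:\ T_i(1)=T_i(0)$ for all $i$, and condition on $\boldsymbol{T}(1),\boldsymbol{T}(0)$. Then for each $1\le k\le K$, $$\mathbb{E}\{D_k(N_k-D_k)\mid\boldsymbol{T}(1),\boldsymbol{T}(0),N_k\}=N_k(N_k-1)h_k(1-h_k)\frac{n_k}{n_k-1},$$ $$\mathbb{E}\{N_{1k}(N_k-N_{1k})\mid\boldsymbol{T}(1),\boldsymbol{T}(0),N_k\}=N_k(N_k-1)\phi_k(1-\phi_k).$$
   Context: There are $n$ units. Unit $i$ has potential event times $T_i(1),T_i(0)\ge 0$, potential censoring times $C_i(1),C_i(0)\in[0,\infty]$, and treatment indicator $Z_i\in\{0,1\}$; bold letters denote $n$-vectors. Assumption 1: conditional on $\boldsymbol{T}(1),\boldsymbol{T}(0),\boldsymbol{C}(1),\boldsymbol{C}(0)$, the $Z_i$ are i.i.d. Bernoulli$(p_1)$, $p_1=1-p_0\in(0,1)$. Assumption 2: $(\boldsymbol{C}(1),\boldsymbol{C}(0))$ is independent of $(\boldsymbol{T}(1),\boldsymbol{T}(0))$ and the pairs $(C_i(1),C_i(0))$ are i.i.d. across $i$. $G_z(c)=\Pr(C_i(z)\ge c)$, $G(t)=p_1G_1(t)+p_0G_0(t)$. Realized: $W_i=\min\{T_i,C_i\}$, $\Delta_i=\mathbb{1}(T_i\le C_i)$ with $T_i=Z_iT_i(1)+(1-Z_i)T_i(0)$, $C_i=Z_iC_i(1)+(1-Z_i)C_i(0)$. Let $t_1<\dots<t_K$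 be the distinct values of $\{T_i(0)\}$, $d_k=\#\{i:T_i(0)=t_k\}$, $n_k=\#\{i:T_i(0)\ge t_k\}$, $h_k=d_k/n_k$, $\phi_k=p_1G_1(t_k)/G(t_k)$; $N_{1k}=\sum_iZ_i\mathbb{1}(W_i\ge t_k)$, $N_k=\sum_i\mathbb{1}(W_i\ge t_k)$, $D_k=\sum_i\Delta_i\mathbb{1}(W_i=t_k)$. Convention $0/0:=0$. *)

From HB Require Import structures.
From mathcomp Require Import all_boot all_order all_algebra.
From mathcomp Require Import all_classical all_reals all_analysis measurable_realfun.
Set Implicit Arguments. Unset Strict Implicit. Unset Printing Implicit Defensive.
Import Order.TTheory GRing.Theory Num.Theory.
Local Open Scope classical_set_scope.
Local Open Scope ring_scope.

Section SurvivalDefs.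
Context {R : realType} {d : measure_display} {Omega : measurableType d}.
Variable P : probability Omega R.

(* Mutual independence of a finite family of classes of events:
   product rule for every choice of one event from each class
   (each class below contains setT, so subfamilies are covered). *)
Definition mutually_independent (I : finType) (F : I -> set (set Omega)) :=
  forall A : I -> set Omega, (forall i, F i (A i)) ->
    P (\bigcap_(i in [set: I]) A i) = (\prod_(i : I) P (A i))%E.

Definition sigma_bool (X : Omega -> bool) : set (set Omega) :=
  [set B | exists b : set bool, B = X @^-1` b].

Definition sigma_pair (X Y : Omega -> \bar R) : set (set Omega) :=
  [set B | exists A : set (\bar R * \bar R), measurable A /\
           B = (fun w => (X w, Y w)) @^-1` A].

Definition units_family n (Z : 'I_n -> Omega -> bool)
  (C1 C0 : 'I_n -> Omega -> \bar R) : 'I_n + 'I_n -> set (set Omega) :=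
  fun j => match j with
           | inl i => sigma_bool (Z i)
           | inr i => sigma_pair (C1 i) (C0 i)
           end.

(* G_z(c) = Pr(C_i(z) >= c), computed at unit i (i.i.d. => independent of i) *)
Definition Gsurv (C : Omega -> \bar R) (c : R) : R :=
  fine (P [set w | (c%:E <= C w)%E]).

(* E{ X | N } = f(N) for a nat-valued N: the defining property of the
   conditional expectation on sigma(N), whose atoms are the events {N = m}. *)
Definition cond_exp_nat_is (X : Omega -> R) (N : Omega -> nat) (f : nat -> R) :=
  forall m : nat,
    (\int[P]_(w in [set: Omega]) (X w * (N w == m)%:R)%:E
     = (f m)%:E * P [set w | N w = m])%E.

End SurvivalDefs.

Section Data.
Context {R : realType} {Omega : Type}.
Variable n : nat.
Variable T1 T0 : 'I_n -> R.
Variable Z : 'I_n -> Omega -> bool.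
Variable C1 C0 : 'I_n -> Omega -> \bar R.

(* distinct values t_1 < ... < t_K of {T_i(0)} (0-indexed here) *)
Definition tvals : seq R := sort <=%R (undup [seq T0 i | i <- enum 'I_n]).
Definition Kn : nat := size tvals.
Definition tk (k : nat) : R := nth 0 tvals k.
Definition dk (k : nat) : nat := #|[set i : 'I_n | T0 i == tk k]|.
Definition nk (k : nat) : nat := #|[set i : 'I_n | tk k <= T0 i]|.
Definition hk (k : nat) : R := (dk k)%:R / (nk k)%:R.

Definition Treal (i : 'I_n) (w : Omega) : R := if Z i w then T1 i else T0 i.
Definition Creal (i : 'I_n) (w : Omega) : \bar R := if Z i w then C1 i w else C0 i w.
Definition Wreal (i : 'I_n) (w : Omega) : \bar R := Order.min (Treal i w)%:E (Creal i w).
Definition Delta (i : 'I_n) (w : Omega) : bool := ((Treal i w)%:E <= Creal i w)%E.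

Definition N1k (k : nat) (w : Omega) : nat :=
  #|[set i : 'I_n | Z i w && ((tk k)%:E <= Wreal i w)%E]|.
Definition Nk (k : nat) (w : Omega) : nat :=
  #|[set i : 'I_n | ((tk k)%:E <= Wreal i w)%E]|.
Definition Dk (k : nat) (w : Omega) : nat :=
  #|[set i : 'I_n | Delta i w && (Wreal i w == (tk k)%:E)]|.
End Data.

(* Under H0 the realized at-risk indicators 1(W_i >= t_k), the event indicators
   and the treatment labels are functions of the random pattern
   v = (Z_i, 1(C_i >= t_k))_i, whose law is, by Assumptions 1 and 2, a product
   of one law pi on bool * bool.  Both identities thus become identities between
   finite sums weighted by prod_i pi (v i).
   Permuting units with the same T_i(0)-status preserves the weights, so every
   ordered pair of distinct units of the risk set {T_i(0) >= t_k} has the same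
   probability q of being at risk together with N = m.  Counting all pairs gives
   n_k (n_k - 1) q = m (m - 1) P(N = m), while D (N - D) counts the pairs made of
   a failure at t_k and a unit with T_i(0) > t_k: this is the hypergeometric
   formula.
   Flipping Z_i rescales the weight by pi(0,1) / pi(1,1) without changing the
   at-risk indicators, so given them the Z_i of the units at risk are independent
   Bernoulli(phi_k); N1 (N - N1) counts the ordered (treated, control) pairs at
   risk, which gives phi_k (1 - phi_k) m (m - 1) P(N = m). *)

From HB Require Import structures.
From mathcomp Require Import all_boot all_order all_algebra.
From mathcomp Require Import all_classical all_reals all_analysis measurable_realfun.
From mathcomp Require Import perm ring.
Import Order.TTheory GRing.Theory Num.Theory.
Local Open Scope classical_set_scope.
Local Open Scope ring_scope.
Set Implicit Arguments. Unset Strict Implicit. Unset Printing Implicit Defensive.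

Lemma leq_sum_andb (I : finType) (p a : pred I) :
  (\sum_i (p i && a i) <= \sum_i a i)%N.
Proof. by apply: leq_sum => i _; case: (p i). Qed.

Section Counting.
Variables (R : pzRingType) (I : finType).
Implicit Types (a p : pred I).

Lemma sum_distinct_pairs a :
  \sum_i \sum_j [&& i != j, a i & a j]%:R =
  (\sum_i a i)%N%:R * ((\sum_i a i)%N%:R - 1) :> R.
Proof.
rewrite mulrBr mulr1 natr_sum big_distrl -sumrB /=; apply: eq_bigr => i _.
rewrite [in LHS](bigD1 i) //= eqxx add0r [in RHS](bigD1 i) //=.
rewrite mulrDr -natrM mulnb andbb addrAC subrr add0r big_distrr /=.
by apply: eq_bigr => j ji; rewrite eq_sym ji -natrM mulnb.
Qed.

Lemma natr_count_split p a :
  (\sum_i (p i && a i))%N%:R * ((\sum_i a i)%N%:R - (\sum_i (p i && a i))%N%:R) =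
  \sum_i \sum_j [&& p i, a i, ~~ p j & a j]%:R :> R.
Proof.
have -> : (\sum_i a i)%N%:R - (\sum_i (p i && a i))%N%:R = (\sum_j (~~ p j && a j))%N%:R :> R.
  apply/eqP; rewrite subr_eq -natrD -big_split /=; apply/eqP; congr _%:R.
  by apply: eq_bigr => i _; case: (p i); case: (a i).
rewrite !natr_sum big_distrlr /=; apply: eq_bigr => i _; apply: eq_bigr => j _.
by case: (p i); case: (a i); case: (p j); case: (a j); rewrite ?mulr1 ?mulr0.
Qed.

End Counting.

Section ProductWeight.
Variables (R : comPzRingType) (X : finType) (n : nat) (pi : X -> R).
Local Notation pattern := {ffun 'I_n -> X}.
Implicit Types (v : pattern) (F K : pattern -> R).

Definition pweight v : R := \prod_i pi (v i).
Definition pmean F : R := \sum_v F v * pweight v.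

Lemma eq_pmean F K : (forall v, F v = K v) -> pmean F = pmean K.
Proof. by move=> FK; apply: eq_bigr => v _; rewrite FK. Qed.

Lemma pmeanZ (c : R) F : pmean (fun v => c * F v) = c * pmean F.
Proof. by rewrite /pmean big_distrr /=; apply: eq_bigr => v _; rewrite mulrA. Qed.

Lemma pmean_sum (I : finType) (F : I -> pattern -> R) :
  pmean (fun v => \sum_i F i v) = \sum_i pmean (F i).
Proof. by rewrite /pmean exchange_big; apply: eq_bigr => v _; rewrite big_distrl. Qed.

Definition permute (s : {perm 'I_n}) v : pattern := [ffun i => v (s i)].

Lemma permute_inj s : injective (permute s).
Proof.
by move=> v1 v2 /ffunP e; apply/ffunP => i; have := e ((s^-1)%g i); rewrite !ffunE permKV.
Qed.

Lemma pmean_permute s F : pmean (F \o permute s) = pmean F.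
Proof.
rewrite [RHS]/pmean (reindex_inj (@permute_inj s)); apply: eq_bigr => v _ /=.
congr (_ * _); rewrite /pweight (reindex_inj (@perm_inj _ s)).
by apply: eq_bigr => i _; rewrite ffunE.
Qed.

Definition map_at (i : 'I_n) (f : X -> X) v : pattern :=
  [ffun l => if l == i then f (v l) else v l].

Lemma map_atK i (f : X -> X) : involutive f -> involutive (map_at i f).
Proof.
by move=> fK v; apply/ffunP => l; rewrite !ffunE; case: eqP => [->|]; rewrite ?eqxx ?fK.
Qed.

Lemma map_at_id i f v l : l != i -> map_at i f v l = v l.
Proof. by rewrite ffunE => /negbTE ->. Qed.

Lemma pweight_at i v : pweight v = pi (v i) * \prod_(l | l != i) pi (v l).
Proof. exact: bigD1. Qed.

Lemma pmean_at_null i x K : pi x = 0 -> pmean (fun v => (v i == x)%:R * K v) = 0.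
Proof.
move=> px0; apply: big1 => v _; have [vix|] := eqVneq (v i) x; last by rewrite !mul0r.
by rewrite (pweight_at i) vix px0 mul0r mulr0.
Qed.

Lemma pmean_swap_at i (f : X -> X) (x : X) K : involutive f ->
  (forall v, K (map_at i f v) = K v) ->
  pi (f x) * pmean (fun v => (v i == x)%:R * K v) =
  pi x * pmean (fun v => (v i == f x)%:R * K v).
Proof.
move=> fK KE; rewrite [in RHS]/pmean (reindex_inj (can_inj (map_atK i fK))).
rewrite /pmean !big_distrr; apply: eq_bigr => v _ /=.
rewrite ffunE eqxx (inj_eq (can_inj fK)) KE.
have [vix|] := eqVneq (v i) x; last by rewrite !mul0r !mulr0.
rewrite !(pweight_at i) ffunE eqxx vix.
under [in RHS]eq_bigr => l li do rewrite map_at_id //.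
by rewrite mul1r; ring.
Qed.

End ProductWeight.

Section AtRisk.
Variables (n : nat) (X : finType) (s : pred 'I_n) (r : pred X).
Implicit Types (v : {ffun 'I_n -> X}).

Definition at_risk i v := s i && r (v i).
Definition Nrisk v := (\sum_i at_risk i v)%N.

Variables (R : comPzRingType) (pi : X -> R).

Definition Nmass m := pmean pi (fun v => (Nrisk v == m)%:R).
Definition pair_mass m i j :=
  pmean pi (fun v => [&& at_risk i v, at_risk j v & Nrisk v == m]%:R).

Lemma sum_pair_mass m :
  \sum_i \sum_j (i != j)%:R * pair_mass m i j = m%:R * (m%:R - 1) * Nmass m.
Proof.
under eq_bigr => i _ do under eq_bigr => j _ do rewrite -pmeanZ.
under eq_bigr => i _ do rewrite -pmean_sum.
rewrite -pmean_sum -pmeanZ; apply: eq_pmean => v.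
have [<-|_] := eqVneq (Nrisk v) m; last first.
  by rewrite mulr0; apply: big1 => i _; apply: big1 => j _; rewrite !andbF mulr0.
rewrite mulr1 -sum_distinct_pairs; apply: eq_bigr => i _; apply: eq_bigr => j _.
by rewrite andbT -natrM mulnb.
Qed.

Lemma pair_mass_permute (g : {perm 'I_n}) m i j : (forall l, s (g l) = s l) ->
  pair_mass m (g i) (g j) = pair_mass m i j.
Proof.
move=> sg; have atE l v : at_risk l (permute g v) = at_risk (g l) v.
  by rewrite /at_risk ffunE sg.
have NE v : Nrisk (permute g v) = Nrisk v.
  rewrite /Nrisk [RHS](reindex_inj (@perm_inj _ g)) /=.
  by apply: eq_bigr => l _; rewrite atE.
rewrite /pair_mass -[RHS](pmean_permute _ g); apply: eq_pmean => v /=.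
by rewrite !atE NE.
Qed.

Lemma pair_mass_out m i j : ~~ (s i && s j) -> pair_mass m i j = 0.
Proof.
move=> nsij; apply: big1 => v _; suff -> : [&& at_risk i v, at_risk j v & Nrisk v == m] = false.
  by rewrite !mul0r.
by apply/negbTE; apply: contra nsij => /and3P[/andP[-> _] /andP[-> _] _].
Qed.

Lemma pair_mass_eq m i j i' j' : s i -> s j -> i != j -> s i' -> s j' -> i' != j' ->
  pair_mass m i j = pair_mass m i' j'.
Proof.
move=> si sj nij si' sj' nij'.
have tperm_s a b : s a = s b -> forall l, s (tperm a b l) = s l.
  by move=> sab l; case: tpermP => [->|->|].
rewrite -(pair_mass_permute m i j (tperm_s i i' _)); last by rewrite si si'.
rewrite tpermL; set j1 := tperm i i' j.
have sj1 : s j1 = s j' by rewrite /j1 tperm_s ?si ?si' // sj sj'.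
have nj1 : j1 != i' by rewrite -{1}(tpermL i i') (inj_eq (@perm_inj _ _)) eq_sym.
rewrite -(pair_mass_permute m i' j1 (tperm_s j1 j' sj1)).
by rewrite tpermL tpermD // eq_sym.
Qed.

Lemma pair_mass_exchangeable m :
  exists q, forall i j, i != j -> pair_mass m i j = (s i && s j)%:R * q.
Proof.
case: (pickP (fun ij : 'I_n * 'I_n => [&& s ij.1, s ij.2 & ij.1 != ij.2])).
  move=> [i0 j0] /and3P[si0 sj0 nij0]; exists (pair_mass m i0 j0) => i j nij.
  have [/andP[si sj]|nsij] := boolP (s i && s j); last by rewrite pair_mass_out // mul0r.
  by rewrite mul1r (pair_mass_eq m si sj nij si0 sj0 nij0).
move=> none; exists 0 => i j nij; rewrite mulr0 pair_mass_out //.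
by apply/negP => /andP[si sj]; have := none (i, j); rewrite /= si sj nij.
Qed.

End AtRisk.

Lemma Nrisk_sub n (X : finType) (s e : pred 'I_n) (r : pred X) v : subpred e s ->
  Nrisk e r v = (\sum_i (e i && at_risk s r i v))%N.
Proof.
by move=> es; apply: eq_bigr => i _; rewrite /at_risk; case: (boolP (e i)) => // /es ->.
Qed.

(* For [nn <= 1] both sides vanish, the left one because [x / 0 = 0]. *)
Lemma hypergeometric_factor (R : numFieldType) (d nn : nat) : (d <= nn)%N ->
  let h := d%:R / nn%:R : R in
  nn%:R * (nn%:R - 1) * (h * (1 - h) * (nn%:R / (nn%:R - 1))) = d%:R * (nn%:R - d%:R).
Proof.
case: nn => [|[|nn]] dn h.
- by move: dn; rewrite leqn0 => /eqP ->; rewrite !mul0r.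
- by rewrite subrr mulr0 mul0r; case: d dn {h} => [|[|]] //; rewrite ?mul0r // subrr mulr0.
have nn0 : nn.+2%:R != 0 :> R by rewrite pnatr_eq0.
have nn1 : nn.+2%:R - 1 != 0 :> R by rewrite subr_eq0 pnatr_eq1.
rewrite /h; move: (nn.+2%:R) nn0 nn1 => N nn0 nn1.
by field; rewrite nn0 nn1.
Qed.

Section Hypergeometric.
Variables (R : numFieldType) (n : nat) (X : finType) (pi : X -> R).
Variables (s e : pred 'I_n) (r : pred X).
Hypothesis e_sub_s : subpred e s.

Lemma pmean_hypergeometric m :
  let nn := (\sum_i s i)%N in
  let h := (\sum_i e i)%N%:R / nn%:R in
  pmean pi (fun v => (Nrisk e r v)%:R * ((Nrisk s r v)%:R - (Nrisk e r v)%:R) *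
                     (Nrisk s r v == m)%:R)
  = m%:R * (m%:R - 1) * h * (1 - h) * (nn%:R / (nn%:R - 1)) * Nmass s r pi m.
Proof.
move=> nn h; have [q qE] := pair_mass_exchangeable s r pi m.
have Nmass_q : m%:R * (m%:R - 1) * Nmass s r pi m = nn%:R * (nn%:R - 1) * q.
  rewrite -sum_pair_mass -sum_distinct_pairs big_distrl /=.
  apply: eq_bigr => i _; rewrite big_distrl /=; apply: eq_bigr => j _.
  by have [->|nij] := eqVneq i j; rewrite ?mul0r // qE // mul1r.
have e_sE : (\sum_i (e i && s i))%N = (\sum_i e i)%N.
  by apply: eq_bigr => i _; case: (boolP (e i)) => // /e_sub_s ->.
have d_le_nn : ((\sum_i e i) <= nn)%N by rewrite -e_sE leq_sum_andb.
rewrite [RHS](_ : _ = nn%:R * (nn%:R - 1) * (h * (1 - h) * (nn%:R / (nn%:R - 1))) * q);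
  last by rewrite (mulrAC _ _ q) -Nmass_q; ring.
rewrite hypergeometric_factor // -e_sE natr_count_split big_distrl /=.
under eq_pmean => v do rewrite (Nrisk_sub _ _ e_sub_s) natr_count_split big_distrl /=.
rewrite pmean_sum; apply: eq_bigr => i _; rewrite big_distrl /=.
under eq_pmean => v do rewrite big_distrl /=.
rewrite pmean_sum; apply: eq_bigr => j _.
have -> : pmean pi (fun v => [&& e i, at_risk s r i v, ~~ e j & at_risk s r j v]%:R *
                              (Nrisk s r v == m)%:R)
          = (e i && ~~ e j)%:R * pair_mass s r pi m i j.
  rewrite -pmeanZ; apply: eq_pmean => v; rewrite -!natrM !mulnb; congr _%:R.
  by case: (e i) (e j) (at_risk s r i v) (at_risk s r j v) => [] [] [] [].
have [/andP[ei nej]|] := boolP (e i && ~~ e j); last first.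
  move=> ne; suff -> : [&& e i, s i, ~~ e j & s j] = false by rewrite mul0r mul0r.
  by move: ne; case: (e i) (e j) => [] [] //=; rewrite andbF.
have nij : i != j by apply: contraNneq nej => <-.
by rewrite mul1r qE // ei nej (e_sub_s ei).
Qed.

End Hypergeometric.

Lemma ratio_split (R : numFieldType) (a b A B : R) : 0 <= a -> 0 <= b ->
  b * A = a * B -> (a = 0 -> A = 0) -> (b = 0 -> B = 0) ->
  A = a / (a + b) * (A + B) /\ B = (1 - a / (a + b)) * (A + B).
Proof.
move=> a0 b0 bA_aB aA bB.
have [/eqP|ab0] := eqVneq (a + b) 0.
  by rewrite paddr_eq0 // => /andP[/eqP/aA-> /eqP/bB->]; rewrite addr0 !mulr0.
have eA : A = a / (a + b) * (A + B).
  by rewrite -[A in LHS](mulfK ab0) mulrDr [A * b]mulrC bA_aB; field.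
by split=> //; rewrite mulrBl mul1r -eA; ring.
Qed.

Section Binomial.
Variables (R : numFieldType) (n : nat) (pi : bool * bool -> R) (s : pred 'I_n).
Hypothesis pi_ge0 : forall x, 0 <= pi x.
Implicit Types (v : {ffun 'I_n -> bool * bool}).

Local Notation phi := (pi (true, true) / (pi (true, true) + pi (false, true))).
Local Notation at_risk := (at_risk s snd).
Local Notation Nrisk := (Nrisk s snd).

Definition Ntreated v := (\sum_i ((v i).1 && at_risk i v))%N.

Definition flip_treatment (x : bool * bool) := (~~ x.1, x.2).

Lemma flip_treatmentK : involutive flip_treatment.
Proof. by case=> [] [] []. Qed.

Lemma at_risk_flip i l v : at_risk l (map_at i flip_treatment v) = at_risk l v.
Proof. by rewrite /at_risk ffunE; case: eqP => // ->. Qed.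

Lemma Nrisk_flip i v : Nrisk (map_at i flip_treatment v) = Nrisk v.
Proof. by apply: eq_bigr => l _; rewrite at_risk_flip. Qed.

(* Given the at-risk indicators, treatment of unit [i] is Bernoulli(phi). *)
Lemma pmean_treated_at i (K : {ffun 'I_n -> bool * bool} -> R) :
  (forall v, K (map_at i flip_treatment v) = K v) ->
  pmean pi (fun v => (v i == (true, true))%:R * K v) =
     phi * pmean pi (fun v => (v i).2%:R * K v)
  /\ pmean pi (fun v => (v i == (false, true))%:R * K v) =
     (1 - phi) * pmean pi (fun v => (v i).2%:R * K v).
Proof.
move=> KE; have -> : pmean pi (fun v => (v i).2%:R * K v) =
    pmean pi (fun v => (v i == (true, true))%:R * K v) +
    pmean pi (fun v => (v i == (false, true))%:R * K v).
  rewrite /pmean -big_split; apply: eq_bigr => v _ /=.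
  by case: (v i) => [] [] []; rewrite ?mul0r ?mul1r ?add0r ?addr0.
apply: ratio_split; rewrite ?pi_ge0 //; try exact: pmean_at_null.
exact: (pmean_swap_at pi (true, true) flip_treatmentK KE).
Qed.

Lemma pmean_treated_control m i j : i != j ->
  pmean pi (fun v => [&& (v i).1, at_risk i v, ~~ (v j).1 & at_risk j v]%:R *
                     (Nrisk v == m)%:R)
  = phi * (1 - phi) * pair_mass s snd pi m i j.
Proof.
move=> nij.
pose K1 v : R := [&& s i, v j == (false, true), s j & Nrisk v == m]%:R.
have K1E v : K1 (map_at i flip_treatment v) = K1 v.
  by rewrite /K1 map_at_id 1?eq_sym // Nrisk_flip.
pose K2 v : R := [&& s j, s i, (v i).2 & Nrisk v == m]%:R.
have K2E v : K2 (map_at j flip_treatment v) = K2 v.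
  by rewrite /K2 map_at_id // Nrisk_flip.
transitivity (pmean pi (fun v => (v i == (true, true))%:R * K1 v)).
  apply: eq_pmean => v; rewrite /K1 /at_risk -!natrM !mulnb; congr _%:R.
  by case: (v i) (v j) => [[] []] [[] []]; case: (s i) (s j) => [] [].
rewrite (proj1 (pmean_treated_at K1E)) -[RHS]mulrA; congr (_ * _).
transitivity (pmean pi (fun v => (v j == (false, true))%:R * K2 v)).
  apply: eq_pmean => v; rewrite /K1 /K2 -!natrM !mulnb; congr _%:R.
  by case: (v i) (v j) => [[] []] [[] []]; case: (s i) (s j) => [] [].
rewrite (proj2 (pmean_treated_at K2E)); congr (_ * _); apply: eq_pmean => v.
rewrite /K2 /at_risk -!natrM !mulnb; congr _%:R.
by case: (v i) (v j) => [[] []] [[] []]; case: (s i) (s j) => [] [].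
Qed.

Lemma pmean_binomial m :
  pmean pi (fun v => (Ntreated v)%:R * ((Nrisk v)%:R - (Ntreated v)%:R) *
                     (Nrisk v == m)%:R)
  = m%:R * (m%:R - 1) * phi * (1 - phi) * Nmass s snd pi m.
Proof.
rewrite [RHS](_ : _ = phi * (1 - phi) * (m%:R * (m%:R - 1) * Nmass s snd pi m)); last by ring.
rewrite -sum_pair_mass big_distrr /=.
under eq_pmean => v do rewrite natr_count_split big_distrl /=.
rewrite pmean_sum; apply: eq_bigr => i _; rewrite big_distrr /=.
under eq_pmean => v do rewrite big_distrl /=.
rewrite pmean_sum; apply: eq_bigr => j _.
have [<-|nij] := eqVneq i j; last by rewrite pmean_treated_control // mul1r mulrC.
rewrite mul0r mulr0; apply: big1 => v _.
by case: ((v i).1); rewrite /= ?andbF !mul0r.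
Qed.

End Binomial.

Section FiniteLaw.
Context (R : realType) (d : measure_display) (Omega : measurableType d).
Variables (P : probability Omega R) (Y : finType) (V : Omega -> Y) (p : Y -> R).
Hypothesis mV : forall y, measurable (V @^-1` [set y]).
Hypothesis lawV : forall y, P (V @^-1` [set y]) = (p y)%:E.

Lemma measurable_preimage (A : set Y) : measurable (V @^-1` A).
Proof.
have -> : V @^-1` A = \bigcup_(y in A) V @^-1` [set y].
  by apply/seteqP; split => w /=; [exists (V w) | case=> y Ay /= ->].
exact: fin_bigcup_measurable finite_finset (fun y _ => mV y).
Qed.

Lemma integral_finite_valued (F : Y -> R) : (forall y, 0 <= F y) ->
  (\int[P]_(w in [set: Omega]) (F (V w))%:E = (\sum_y F y * p y)%:E)%E.
Proof.
move=> F0; have -> : (fun w => (F (V w))%:E) =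
    (fun w => \sum_y (F y * \1_(V @^-1` [set y]) w)%:E)%E.
  apply/funext => w; rewrite (bigD1 (V w)) //= big1 ?adde0.
    by rewrite indicE mem_set // mulr1.
  by move=> y Vy; rewrite indicE memNset ?mulr0 // => /= Vwy; rewrite Vwy eqxx in Vy.
rewrite ge0_integral_sum //.
- rewrite -sumEFin; apply: eq_bigr => y _; rewrite EFinM -lawV.
  under eq_integral do rewrite EFinM.
  rewrite ge0_integralZl_EFin ?integral_indic ?setIT //.
  by apply/measurable_EFinP; exact: measurable_indic.
- move=> y; apply/measurable_EFinP; apply: measurable_funM.
    exact: measurable_cst.
  exact: measurable_indic.
- by move=> y w _; rewrite lee_fin mulr_ge0 // indicE.
Qed.

Lemma cond_exp_nat_is_finite (X : Omega -> R) (N : Omega -> nat)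
    (G : Y -> R) (M : Y -> nat) (f : nat -> R) :
  (forall w, X w = G (V w)) -> (forall w, N w = M (V w)) -> (forall y, 0 <= G y) ->
  (forall m, \sum_y G y * (M y == m)%:R * p y = f m * \sum_y (M y == m)%:R * p y) ->
  cond_exp_nat_is P X N f.
Proof.
move=> XE NE G0 Gf m.
have PN : P [set w | N w = m] = (\sum_y (M y == m)%:R * p y)%:E.
  rewrite -integral_finite_valued // -(setIT [set w | N w = m]) -integral_indic //; last first.
    rewrite (_ : [set w | N w = m] = V @^-1` [set y | M y = m]).
      exact: measurable_preimage.
    by apply/seteqP; split => w /=; rewrite NE.
  apply: eq_integral => w _; rewrite indicE -NE.
  have [Nm|Nm] := eqVneq (N w) m; first by rewrite mem_set.
  by rewrite memNset //= => /eqP; rewrite (negbTE Nm).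
under eq_integral do rewrite XE NE.
rewrite (integral_finite_valued (F := fun y => G y * (M y == m)%:R)); last first.
  by move=> y; rewrite mulr_ge0.
by rewrite Gf EFinM PN.
Qed.

End FiniteLaw.

Lemma card_set_sum (I : finType) (b : pred I) : #|[set i | b i]| = (\sum_i b i)%N.
Proof.
rewrite -sum1_card [LHS]big_mkcond /=; apply: eq_bigr => i _.
have [bi|nbi] := boolP (b i); first by rewrite mem_set.
by rewrite memNset //; apply/negP.
Qed.

Section SamplePattern.
Context (R : realType) (Omega : Type) (n : nat) (T0 : 'I_n -> R).
Variables (Z : 'I_n -> Omega -> bool) (C1 C0 : 'I_n -> Omega -> \bar R).

Definition uncensored_at t i w := (t%:E <= Creal Z C1 C0 i w)%E.
Definition sample_pattern t w : {ffun 'I_n -> bool * bool} :=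
  [ffun i => (Z i w, uncensored_at t i w)].

Lemma at_risk_realized t i w :
  (t%:E <= Wreal T0 T0 Z C1 C0 i w)%E = (t <= T0 i) && uncensored_at t i w.
Proof. by rewrite /Wreal /Treal if_same le_min lee_fin. Qed.

Lemma event_realized t i w :
  Delta T0 T0 Z C1 C0 i w && (Wreal T0 T0 Z C1 C0 i w == t%:E) =
  (T0 i == t) && uncensored_at t i w.
Proof.
rewrite /Delta /Wreal /Treal /uncensored_at if_same.
have [le|lt] := leP (T0 i)%:E (Creal Z C1 C0 i w).
  by rewrite eqe; case: eqP => // <-.
by rewrite andFb; case: eqP => // <-; rewrite leNgt lt.
Qed.

Variable k : nat.
Local Notation s := (fun i => tk T0 k <= T0 i).
Local Notation V := (sample_pattern (tk T0 k)).

Lemma Nk_pattern w : Nk T0 T0 Z C1 C0 k w = Nrisk s snd (V w).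
Proof.
by rewrite /Nk card_set_sum; apply: eq_bigr => i _; rewrite at_risk_realized /at_risk ffunE.
Qed.

Lemma N1k_pattern w : N1k T0 T0 Z C1 C0 k w = Ntreated s (V w).
Proof.
by rewrite /N1k card_set_sum; apply: eq_bigr => i _; rewrite at_risk_realized /at_risk ffunE.
Qed.

Lemma Dk_pattern w : Dk T0 T0 Z C1 C0 k w = Nrisk (fun i => T0 i == tk T0 k) snd (V w).
Proof.
by rewrite /Dk card_set_sum; apply: eq_bigr => i _; rewrite event_realized /at_risk ffunE.
Qed.

End SamplePattern.

Section CensoredSample.
Context (R : realType) (d : measure_display) (Omega : measurableType d).
Variables (P : probability Omega R) (n : nat) (Z : 'I_n -> Omega -> bool).
Variables (C1 C0 : 'I_n -> Omega -> \bar R) (t : R).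

Local Notation sample_pattern := (sample_pattern Z C1 C0 t).
Definition censoring i w := (C1 i w, C0 i w).

Definition uncensored_event (x : bool * bool) : set (\bar R * \bar R) :=
  [set c | (t%:E <= (if x.1 then c.1 else c.2))%E = x.2].

Definition unit_event (v : {ffun 'I_n -> bool * bool}) (j : 'I_n + 'I_n) :=
  match j with
  | inl i => Z i @^-1` [set (v i).1]
  | inr i => censoring i @^-1` uncensored_event (v i)
  end.

Definition unit_law i (x : bool * bool) : R :=
  fine (P (Z i @^-1` [set x.1])) * fine (P (censoring i @^-1` uncensored_event x)).

Lemma sample_pattern_preimage v :
  sample_pattern @^-1` [set v] = \bigcap_(j in [set: 'I_n + 'I_n]) unit_event v j.
Proof.
apply/seteqP; split => w /=.
  by move=> <- [] i _; rewrite /= ffunE.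
move=> vw; apply/ffunP => i; rewrite ffunE.
move: (vw (inl i) I) (vw (inr i) I); rewrite /uncensored_at /Creal /=.
by case: (v i) => z b /= ->; rewrite /uncensored_event /= => <-.
Qed.

Hypothesis mZ : forall i, measurable (Z i @^-1` [set true]).
Hypothesis mC1 : forall i, measurable_fun [set: Omega] (C1 i).
Hypothesis mC0 : forall i, measurable_fun [set: Omega] (C0 i).

Lemma Z_preimage_false i : Z i @^-1` [set false] = ~` (Z i @^-1` [set true]).
Proof. by apply/seteqP; split => w /=; case: (Z i w). Qed.

Lemma measurable_Z_preimage i b : measurable (Z i @^-1` [set b]).
Proof. by case: b; [exact: mZ | rewrite Z_preimage_false; exact: measurableC]. Qed.

Lemma measurable_censoring_preimage i A : measurable A -> measurable (censoring i @^-1` A).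
Proof.
move=> mA; rewrite -[X in measurable X]setTI.
exact: measurable_fun_pair (mC1 i) (mC0 i) measurableT _ mA.
Qed.

Lemma measurable_uncensored_event x : measurable (uncensored_event x).
Proof.
have mB (b : bool) : measurable [set c : \bar R | (t%:E <= c)%E = b].
  have mge : measurable [set c : \bar R | (t%:E <= c)%E].
    by rewrite -set_itvcy; exact: emeasurable_itv.
  case: b => //; rewrite (_ : [set c | _ = false] = ~` [set c | (t%:E <= c)%E]).
    exact: measurableC.
  by apply/seteqP; split => c /=; case: (_ <= _)%E.
case: x => [[] b]; rewrite /uncensored_event /= -[X in measurable X]setTI.
  exact: measurable_fst measurableT _ (mB b).
exact: measurable_snd measurableT _ (mB b).
Qed.

Lemma measurable_sample_pattern v : measurable (sample_pattern @^-1` [set v]).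
Proof.
rewrite sample_pattern_preimage; apply: fin_bigcap_measurable => // -[] i _.
  exact: measurable_Z_preimage.
apply: measurable_censoring_preimage; exact: measurable_uncensored_event.
Qed.

Hypothesis indep : mutually_independent P (units_family Z C1 C0).

Lemma sample_pattern_law v :
  P (sample_pattern @^-1` [set v]) = (\prod_i unit_law i (v i))%:E.
Proof.
have fineK_P A : measurable A -> P A = (fine (P A))%:E.
  by move=> mA; rewrite fineK // fin_num_measure.
rewrite sample_pattern_preimage indep; last first.
  by case=> i /=; [exists [set (v i).1] | exists (uncensored_event (v i));
    split=> //; exact: measurable_uncensored_event].
rewrite big_sumType /= (eq_bigr (fun i => (fine (P (unit_event v (inl i))))%:E)); last first.
  by move=> i _; rewrite -fineK_P //; exact: measurable_Z_preimage.
rewrite [X in (_ * X)%E](eq_bigr (fun i => (fine (P (unit_event v (inr i))))%:E)); last first.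
  move=> i _; rewrite -fineK_P //.
  by apply: measurable_censoring_preimage; exact: measurable_uncensored_event.
by rewrite !prodEFin -EFinM -big_split.
Qed.

Variable p1 : R.
Hypothesis PZ : forall i, P (Z i @^-1` [set true]) = p1%:E.
Hypothesis censoring_iid : forall i j A, measurable A ->
  P (censoring i @^-1` A) = P (censoring j @^-1` A).

Lemma P_Z_preimage i b : P (Z i @^-1` [set b]) = (if b then p1 else 1 - p1)%:E.
Proof.
by case: b; rewrite ?Z_preimage_false ?probability_setC ?PZ.
Qed.

Lemma unit_law_iid i j : unit_law i = unit_law j.
Proof.
apply/funext => x; rewrite /unit_law !P_Z_preimage (censoring_iid i j) //.
exact: measurable_uncensored_event.
Qed.

Lemma unit_law_ge0 i x : 0 <= unit_law i x.
Proof. by rewrite mulr_ge0 // fine_ge0. Qed.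

Lemma unit_law_treated i : unit_law i (true, true) = p1 * Gsurv P (C1 i) t.
Proof. by rewrite /unit_law P_Z_preimage. Qed.

Lemma unit_law_control i : unit_law i (false, true) = (1 - p1) * Gsurv P (C0 i) t.
Proof. by rewrite /unit_law P_Z_preimage. Qed.

Lemma sample_pattern_pweight i0 v :
  P (sample_pattern @^-1` [set v]) = (pweight (unit_law i0) v)%:E.
Proof.
by rewrite sample_pattern_law /pweight; under eq_bigr do rewrite (unit_law_iid _ i0).
Qed.

End CensoredSample.

Lemma tk_observed (R : realType) n (T0 : 'I_n -> R) k :
  (k < Kn T0)%N -> exists i, T0 i = tk T0 k.
Proof.
move=> kK; have : tk T0 k \in tvals T0 by rewrite /tk mem_nth.
by rewrite /tvals mem_sort mem_undup => /mapP[i _ ->]; exists i.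
Qed.

Section NullHypothesis.
Context (R : realType) (d : measure_display) (Omega : measurableType d).
Variables (P : probability Omega R) (n : nat) (T0 : 'I_n -> R).
Variables (Z : 'I_n -> Omega -> bool) (C1 C0 : 'I_n -> Omega -> \bar R) (p1 : R).
Hypothesis mZ : forall i, measurable (Z i @^-1` [set true]).
Hypothesis mC1 : forall i, measurable_fun [set: Omega] (C1 i).
Hypothesis mC0 : forall i, measurable_fun [set: Omega] (C0 i).
Hypothesis indep : mutually_independent P (units_family Z C1 C0).
Hypothesis PZ : forall i, P (Z i @^-1` [set true]) = p1%:E.
Hypothesis censoring_iid : forall i j A, measurable A ->
  P (censoring C1 C0 i @^-1` A) = P (censoring C1 C0 j @^-1` A).
Variable k : nat.

Local Notation s := (fun i => tk T0 k <= T0 i).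
Let mV := measurable_sample_pattern (tk T0 k) mZ mC1 mC0.
Let lawV := sample_pattern_pweight (tk T0 k) mZ mC1 mC0 indep PZ censoring_iid.

Lemma cond_exp_Dk : (k < Kn T0)%N ->
  cond_exp_nat_is P
    (fun w => (Dk T0 T0 Z C1 C0 k w)%:R *
              ((Nk T0 T0 Z C1 C0 k w)%:R - (Dk T0 T0 Z C1 C0 k w)%:R))
    (Nk T0 T0 Z C1 C0 k)
    (fun m => m%:R * (m%:R - 1) * hk T0 k * (1 - hk T0 k) *
              ((nk T0 k)%:R / ((nk T0 k)%:R - 1))).
Proof.
(* Any unit can serve as the reference for the common law [unit_law i0]. *)
move=> kK; have [i0 _] := tk_observed kK.
pose e i := T0 i == tk T0 k.
have e_sub_s : subpred e s by move=> i; rewrite /e => /eqP ->.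
pose G (v : {ffun 'I_n -> bool * bool}) : R :=
  (Nrisk e snd v)%:R * ((Nrisk s snd v)%:R - (Nrisk e snd v)%:R).
apply: (cond_exp_nat_is_finite (G := G) mV (lawV i0) _ (Nk_pattern _ _ _ _ k)) => [w|v|m].
- by rewrite Dk_pattern Nk_pattern.
- by rewrite mulr_ge0 // subr_ge0 ler_nat (Nrisk_sub _ _ e_sub_s) leq_sum_andb.
rewrite /hk /dk /nk !card_set_sum.
exact: (pmean_hypergeometric _ _ e_sub_s).
Qed.

Lemma cond_exp_N1k i0 :
  let phi := p1 * Gsurv P (C1 i0) (tk T0 k) /
    (p1 * Gsurv P (C1 i0) (tk T0 k) + (1 - p1) * Gsurv P (C0 i0) (tk T0 k)) in
  cond_exp_nat_is P
    (fun w => (N1k T0 T0 Z C1 C0 k w)%:R *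
              ((Nk T0 T0 Z C1 C0 k w)%:R - (N1k T0 T0 Z C1 C0 k w)%:R))
    (Nk T0 T0 Z C1 C0 k)
    (fun m => m%:R * (m%:R - 1) * phi * (1 - phi)).
Proof.
pose G (v : {ffun 'I_n -> bool * bool}) : R :=
  (Ntreated s v)%:R * ((Nrisk s snd v)%:R - (Ntreated s v)%:R).
apply: (cond_exp_nat_is_finite (G := G) mV (lawV i0) _ (Nk_pattern _ _ _ _ k)) => [w|v|m].
- by rewrite N1k_pattern Nk_pattern.
- by rewrite mulr_ge0 // subr_ge0 ler_nat leq_sum_andb.
rewrite -(unit_law_treated C1 C0 _ mZ PZ) -(unit_law_control C1 C0 _ mZ PZ).
exact: pmean_binomial (unit_law_ge0 P Z C1 C0 _ i0) m.
Qed.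

End NullHypothesis.

Unset Implicit Arguments. Set Strict Implicit.

Theorem lemmaA5 (R : realType) (d : measure_display) (Omega : measurableType d)
  (P : probability Omega R) (n : nat) (T1 T0 : 'I_n -> R)
  (Z : 'I_n -> Omega -> bool) (C1 C0 : 'I_n -> Omega -> \bar R) (p1 : R) :
  (* potential outcomes and censoring times *)
  (forall i, 0 <= T1 i) -> (forall i, 0 <= T0 i) ->
  (forall i w, (0 <= C1 i w)%E) -> (forall i w, (0 <= C0 i w)%E) ->
  (forall i, measurable (Z i @^-1` [set true])) ->
  (forall i, measurable_fun [set: Omega] (C1 i)) ->
  (forall i, measurable_fun [set: Omega] (C0 i)) ->
  (* Assumptions 1 and 2 (given T(1), T(0)): Z_1..Z_n i.i.d. Bernoulli(p1),
     independent of the censoring pairs, which are i.i.d. across units *)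
  0 < p1 < 1 ->
  mutually_independent P (units_family Z C1 C0) ->
  (forall i, P (Z i @^-1` [set true]) = p1%:E) ->
  (forall i j (A : set (\bar R * \bar R)), measurable A ->
     P ((fun w => (C1 i w, C0 i w)) @^-1` A)
     = P ((fun w => (C1 j w, C0 j w)) @^-1` A)) ->
  (* null hypothesis H0 *)
  (forall i, T1 i = T0 i) ->
  forall (k : nat), (k < Kn T0)%N ->
  let phik (i0 : 'I_n) :=
    p1 * Gsurv P (C1 i0) (tk T0 k) /
    (p1 * Gsurv P (C1 i0) (tk T0 k) + (1 - p1) * Gsurv P (C0 i0) (tk T0 k)) in
  cond_exp_nat_is P
    (fun w => (Dk T1 T0 Z C1 C0 k w)%:R *
              ((Nk T1 T0 Z C1 C0 k w)%:R - (Dk T1 T0 Z C1 C0 k w)%:R))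
    (Nk T1 T0 Z C1 C0 k)
    (fun m => m%:R * (m%:R - 1) * hk T0 k * (1 - hk T0 k) *
              ((nk T0 k)%:R / ((nk T0 k)%:R - 1)))
  /\ forall i0 : 'I_n,
  cond_exp_nat_is P
    (fun w => (N1k T1 T0 Z C1 C0 k w)%:R *
              ((Nk T1 T0 Z C1 C0 k w)%:R - (N1k T1 T0 Z C1 C0 k w)%:R))
    (Nk T1 T0 Z C1 C0 k)
    (fun m => m%:R * (m%:R - 1) * phik i0 * (1 - phik i0)).
Proof.
move=> _ _ _ _ mZ mC1 mC0 _ indep PZ iid H0 k kK phik.
have -> : T1 = T0 := funext H0.
split; first exact: cond_exp_Dk.
by move=> i0; exact: cond_exp_N1k.
Qed.
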